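(* For any prime $p\ge5$, any integer $\alpha\ge0$ and any integer $n\ge0$, \[ b_2\!\left(p^{2\alpha+1}n+\frac{(24j+1)p^{2\alpha}-1}{24}\right)\equiv 0 \pmod 2 \] for every integer $j$ with $0\le j\le p-1$ and $\left(\frac{24j+1}{p}\right)=-1$.
   Context: For a positive integer $\ell$, $b_\ell(n)$ denotes the number of partitions of $n$ having no part divisible by $\ell$. $\left(\frac{a}{p}\right)$ is the Legendre symbol. *)

From mathcomp Require Import all_boot all_algebra.
Set Implicit Arguments. Unset Strict Implicit. Unset Printing Implicit Defensive.

(* A partition of n is encoded by its multiplicity function: m i = number of
   parts equal to i.+1, for i < n (parts are at most n, multiplicities at most n). *)
Definition is_partition_mult (n : nat) (m : {ffun 'I_n -> 'I_n.+1}) : bool :=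
  \sum_(i < n) (i.+1 * m i) == n.

Definition b (ell n : nat) : nat :=
  #|[set m : {ffun 'I_n -> 'I_n.+1} | is_partition_mult m &
      [forall i : 'I_n, (ell %| i.+1) ==> (nat_of_ord (m i) == 0)]]|.

Definition legendre (p a : nat) : int :=
  if p %| a then (0%:Z)%R
  else if [exists x : 'I_p, (x * x == a %[mod p])] then (1%:Z)%R
  else (-1)%R.

From mathcomp Require Import all_boot all_algebra.
From mathcomp Require Import ring zify.
Set Implicit Arguments. Unset Strict Implicit. Unset Printing Implicit Defensive.
Import GRing.Theory.

(* Modulo 2, the generating function prod_(m odd) 1/(1 - q^m) of b_2 equals
   prod_m (1 + q^m) (Euler's odd/distinct parts identity), which in characteristic
   2 is prod_m (1 - q^m).  By Euler's pentagonal number theorem, its coefficient of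
   q^N vanishes unless 24 N + 1 is a square.  For the N of the theorem,
   24 N + 1 = p^(2 alpha) (24 p n + 24 j + 1), and the second factor is congruent
   to the quadratic nonresidue 24 j + 1 modulo p, so it is not a square.  Power
   series are handled as polynomials compared modulo X^(N+1). *)

Local Open Scope ring_scope.

Section TruncatedEquality.
Variable R : comNzRingType.
Implicit Types p q : {poly R}.

Definition eqmodXn (t : nat) p q := exists r, p = q + 'X^t * r.

Lemma eqmodXn_refl t p : eqmodXn t p p.
Proof. by exists 0; rewrite mulr0 addr0. Qed.

Lemma eqmodXn_sym t p q : eqmodXn t p q -> eqmodXn t q p.
Proof. by case=> r ->; exists (- r); ring. Qed.

Lemma eqmodXn_trans t p q s : eqmodXn t p q -> eqmodXn t q s -> eqmodXn t p s.
Proof. by case=> r -> [r' ->]; exists (r + r'); ring. Qed.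

Lemma eqmodXnD t p q p' q' :
  eqmodXn t p q -> eqmodXn t p' q' -> eqmodXn t (p + p') (q + q').
Proof. by case=> r -> [r' ->]; exists (r + r'); ring. Qed.

Lemma eqmodXnM t p q p' q' :
  eqmodXn t p q -> eqmodXn t p' q' -> eqmodXn t (p * p') (q * q').
Proof. by case=> r -> [r' ->]; exists (q * r' + r * q' + 'X^t * r * r'); ring. Qed.

Lemma eqmodXn_sum0 t (I : Type) (r : seq I) (P : pred I) (F : I -> {poly R}) :
  (forall i, P i -> eqmodXn t (F i) 0) -> eqmodXn t (\sum_(i <- r | P i) F i) 0.
Proof.
move=> F0; apply: (big_ind (eqmodXn t ^~ 0)); [exact: eqmodXn_refl | | exact: F0].
by move=> x y x0 y0; rewrite -(addr0 0); apply: eqmodXnD.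
Qed.

Lemma eqmodXn_prod1 t (I : Type) (r : seq I) (P : pred I) (F : I -> {poly R}) :
  (forall i, P i -> eqmodXn t (F i) 1) -> eqmodXn t (\prod_(i <- r | P i) F i) 1.
Proof.
move=> F1; apply: (big_ind (eqmodXn t ^~ 1)); [exact: eqmodXn_refl | | exact: F1].
by move=> x y x1 y1; rewrite -(mulr1 1); apply: eqmodXnM.
Qed.

Lemma eqmodXn_1DXn t k : (t <= k)%N -> eqmodXn t (1 + 'X^k) 1.
Proof. by move=> le_tk; exists 'X^(k - t); rewrite -exprD subnKC. Qed.

Lemma eqmodXn_le t t' p q : (t' <= t)%N -> eqmodXn t p q -> eqmodXn t' p q.
Proof. by move=> le_t't [r ->]; exists ('X^(t - t') * r); rewrite mulrA -exprD subnKC. Qed.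

Lemma eqmodXn_coef t p q i : eqmodXn t p q -> (i < t)%N -> p`_i = q`_i.
Proof. by case=> r -> lt_it; rewrite coefD coefXnM lt_it addr0. Qed.

End TruncatedEquality.

Fixpoint tri (k : nat) : nat := if k is k'.+1 then (tri k' + k)%N else 0%N.

Lemma tri_double k : (tri k).*2 = (k * k.+1)%N.
Proof. by elim: k => //= k IHk; rewrite doubleD IHk; lia. Qed.

(* [pent j] and [pent_dual j] are the pentagonal numbers j(3j-1)/2 and j(3j+1)/2. *)
Definition pent (j : nat) : nat := (tri j + j * j - j)%N.
Definition pent_dual (j : nat) : nat := (tri j + j * j)%N.

Lemma pent_square j :
  (exists x, 24 * pent j + 1 = x * x)%N /\ (exists x, 24 * pent_dual j + 1 = x * x)%N.
Proof.
have tri2 := tri_double j; rewrite -muln2 in tri2.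
split; last by exists (6 * j + 1)%N; rewrite /pent_dual; nia.
case: j tri2 => [|j] tri2; first by exists 1%N.
by exists (6 * j + 5)%N; rewrite /pent; nia.
Qed.

Section Pentagonal.
Variable R : comNzRingType.

Definition pentagonal_sum (n : nat) : {poly R} :=
  \sum_(j < n.+1) (-1) ^+ j * ('X^(pent j) + 'X^(pent_dual j)) - 1.

Definition prod_tail (n k : nat) : {poly R} := \prod_(k.+1 <= i < n.+1) (1 - 'X^i).

(* The terms of Shanks' finite form of Euler's pentagonal number theorem. *)
Definition shanks_term (n k : nat) : {poly R} :=
  (-1) ^+ k * prod_tail n k * 'X^(tri k + k * n).

Definition shanks_sum (n : nat) : {poly R} := \sum_(k < n.+1) shanks_term n k.

Lemma prod_tailSr n k : (k <= n)%N -> prod_tail n.+1 k = prod_tail n k * (1 - 'X^(n.+1)).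
Proof. by move=> le_kn; rewrite /prod_tail big_nat_recr. Qed.

Lemma prod_tailSl n k : (k < n)%N -> prod_tail n k = (1 - 'X^(k.+1)) * prod_tail n k.+1.
Proof. by move=> lt_kn; rewrite /prod_tail big_ltn. Qed.

Lemma prod_tail_id n : prod_tail n n = 1.
Proof. by rewrite /prod_tail big_geq. Qed.

Lemma shanks_sumS n :
  shanks_sum n.+1 = shanks_sum n + (-1) ^+ n.+1 * ('X^(pent n.+1) + 'X^(pent_dual n.+1)).
Proof.
pose A k := (-1) ^+ k * prod_tail n k * 'X^(tri k + k * n.+1).
pose B k := A k * 'X^(n.+1).
have termS (k : 'I_n.+1) : shanks_term n.+1 k = A k - B k.
  rewrite /shanks_term /B /A prod_tailSr -1?ltnS // mulnSr addnA exprD; ring.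
have A_shift (k : 'I_n) : A k.+1 = shanks_term n k.+1 + B k.
  rewrite /B /A /shanks_term (@prod_tailSl n k) //=.
  have -> : (tri k + k.+1 + k.+1 * n.+1 = tri k + k * n.+1 + n.+1 + k.+1)%N by lia.
  have -> : (tri k + k.+1 + k.+1 * n = tri k + k * n.+1 + n.+1)%N by lia.
  rewrite !exprD exprS; ring.
have sumA : \sum_(k < n.+1) A k = shanks_sum n + \sum_(k < n) B k.
  rewrite /shanks_sum !big_ord_recl /= -addrA; congr (_ + _).
  by rewrite -big_split; apply: eq_bigr => i _; rewrite A_shift.
rewrite /shanks_sum big_ord_recr /= (eq_bigr _ (fun k _ => termS k)) sumrB sumA.
rewrite big_ord_recr /= -/(shanks_sum n); set Bs := \sum_(k < n) B k.
rewrite /B /A /shanks_term !prod_tail_id /pent /pent_dual /=.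
have -> : (tri n + n.+1 + n.+1 * n.+1 - n.+1 = tri n + n.+1 * n.+1)%N.
  by rewrite addnAC addnK.
have -> : (n.+1 * n.+1 = n * n.+1 + n.+1)%N by rewrite mulSn addnC.
rewrite !exprD !exprS; ring.
Qed.

Lemma shanks_sum_pentagonal n : shanks_sum n = pentagonal_sum n.
Proof.
elim: n => [|n IHn].
  rewrite /shanks_sum /pentagonal_sum !big_ord1 /shanks_term prod_tail_id.
  by rewrite /pent /pent_dual /= !expr0; ring.
by rewrite shanks_sumS IHn /pentagonal_sum [in RHS]big_ord_recr /=; ring.
Qed.

Lemma shanks_sum_trunc n : eqmodXn n.+1 (shanks_sum n) (prod_tail n 0).
Proof.
rewrite /shanks_sum big_ord_recl -[prod_tail n 0]addr0; apply: eqmodXnD.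
  by rewrite /shanks_term /= expr0 mul1r mulr1; apply: eqmodXn_refl.
apply: eqmodXn_sum0 => k _; rewrite lift0 /shanks_term.
exists ((-1) ^+ k.+1 * prod_tail n k.+1 * 'X^(tri k + k + k * n)).
have -> : (tri k + k.+1 + k.+1 * n = n.+1 + (tri k + k + k * n))%N by lia.
by rewrite add0r exprD; ring.
Qed.

Lemma coef_prod_1subXn n i :
  (i <= n)%N -> (\prod_(1 <= m < n.+1) (1 - 'X^m) : {poly R})`_i = (pentagonal_sum n)`_i.
Proof.
move=> le_in; rewrite -shanks_sum_pentagonal.
by apply/esym/(eqmodXn_coef (shanks_sum_trunc n)); rewrite ltnS.
Qed.

Lemma coef_pentagonal_sum_nonsquare N :
  (forall x, x * x != 24 * N + 1)%N -> (pentagonal_sum N)`_N = 0.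
Proof.
move=> nonsq.
have not_pent m : (exists x, 24 * m + 1 = x * x)%N -> (N == m) = false.
  by case=> x sq_x; apply/negbTE/eqP => Nm; move: (nonsq x); rewrite Nm sq_x eqxx.
have N_neq0 : (N != 0)%N by rewrite not_pent //; exists 1%N.
rewrite /pentagonal_sum coefB coef_sum coefC (negbTE N_neq0) subr0 big1 // => j _.
have [pent_sq pent_dual_sq] := pent_square j.
rewrite -signr_odd mulr_sign.
by case: (odd j); rewrite ?coefN coefD !coefXn (not_pent _ pent_sq)
  (not_pent _ pent_dual_sq) addr0 ?oppr0.
Qed.

End Pentagonal.

Section OddParts.
Variable R : comNzRingType.

Definition geom_trunc (N k : nat) : {poly R} := \sum_(j < N.+1) 'X^(k * j).

Definition gf_odd_parts (N : nat) : {poly R} :=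
  \prod_(1 <= m < N.+1 | odd m) geom_trunc N m.

(* Factor [i] of the product records the number [j] of parts equal to [i.+1], as in
   [is_partition_mult]; even parts are excluded. *)
Definition odd_parts_monomial N (i : 'I_N) (j : 'I_N.+1) : {poly R} :=
  if (2 %| i.+1)%N && (j != 0 :> nat) then 0 else 'X^(i.+1 * j).

Lemma prod_odd_parts_monomial N :
  \prod_(i < N) \sum_(j < N.+1) odd_parts_monomial i j = gf_odd_parts N.
Proof.
have sum_monomial (i : 'I_N) : \sum_(j < N.+1) odd_parts_monomial i j =
    if odd i.+1 then geom_trunc N i.+1 else 1.
  rewrite /odd_parts_monomial dvdn2; case: (odd i.+1) => //=.
  by rewrite big_ord_recl /= muln0 expr0 big1 ?addr0.
rewrite (eq_bigr _ (fun i _ => sum_monomial i)) /gf_odd_parts big_add1 /= big_mkord.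
by rewrite [RHS]big_mkcond.
Qed.

Lemma b2_gf_odd_parts N : (b 2 N)%:R = (gf_odd_parts N)`_N.
Proof.
rewrite -prod_odd_parts_monomial bigA_distr_bigA /= coef_sum.
pose no_even (m : {ffun 'I_N -> 'I_N.+1}) :=
  [forall i : 'I_N, (2 %| i.+1)%N ==> (nat_of_ord (m i) == 0%N)].
have coef_term (m : {ffun 'I_N -> 'I_N.+1}) :
    (\prod_(i < N) odd_parts_monomial i (m i))`_N =
    (no_even m && is_partition_mult m : nat)%:R.
  case no_even_m: (no_even m) => /=.
    rewrite (eq_bigr (fun i : 'I_N => 'X^(i.+1 * m i))); last first.
      move=> i _; rewrite /odd_parts_monomial; move/forallP: no_even_m => /(_ i).
      by case: (2 %| i.+1)%N => //= /eqP ->.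
    by rewrite -expr_sum coefXn eq_sym.
  have /forallPn [i] := negbT no_even_m; rewrite negb_imply => /andP [even_i m_i].
  by rewrite (bigD1 i) //= /odd_parts_monomial even_i m_i mul0r coef0.
rewrite (eq_bigr _ (fun m _ => coef_term m)) -natr_sum /b; congr (_%:R).
rewrite cardE /enum_mem size_filter -sum1_count -big_filter big_filter big_mkcond /=.
by apply: eq_bigr => m _; rewrite inE andbC.
Qed.

End OddParts.

Section CharTwo.
Variable R : comNzRingType.
Hypothesis R_pchar2 : 2 \in [pchar R].
Implicit Types p q : {poly R}.

Definition gf_distinct (n : nat) : {poly R} := \prod_(1 <= m < n.+1) (1 + 'X^m).
Definition gf_distinct_odd (n : nat) : {poly R} :=
  \prod_(1 <= m < n.+1 | odd m) (1 + 'X^m).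
Definition gf_distinct_even (n : nat) : {poly R} :=
  \prod_(1 <= m < n.+1 | ~~ odd m) (1 + 'X^m).

Lemma pchar2_poly : 2 \in [pchar {poly R}].
Proof. by rewrite pchar_poly. Qed.

Lemma sqrrD_pchar2 p q : (p + q) ^+ 2 = p ^+ 2 + q ^+ 2.
Proof. by apply: exprDn_pchar; rewrite pnatE ?pchar2_poly. Qed.

Lemma sqr_1DXn k : (1 + 'X^k) ^+ 2 = 1 + 'X^(k.*2) :> {poly R}.
Proof. by rewrite sqrrD_pchar2 expr1n -exprM muln2. Qed.

Lemma eqmodXn_sqr1 t p : eqmodXn t p 1 -> eqmodXn t.*2 (p ^+ 2) 1.
Proof.
by case=> r ->; exists (r ^+ 2); rewrite sqrrD_pchar2 expr1n exprMn -exprM muln2.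
Qed.

Lemma gf_distinct_split n : gf_distinct n = gf_distinct_odd n * gf_distinct_even n.
Proof. by rewrite /gf_distinct (bigID odd). Qed.

Lemma gf_distinct_even_sqr n : gf_distinct_even n = gf_distinct n./2 ^+ 2.
Proof.
elim: n => [|n IHn]; first by rewrite /gf_distinct_even /gf_distinct !big_geq ?expr1n.
rewrite /gf_distinct_even big_mkcond big_nat_recr //= -big_mkcond -/(gf_distinct_even n).
rewrite IHn /= uphalf_half; case: (boolP (odd n)) => odd_n /=; last by rewrite mulr1.
rewrite add1n [in RHS]/gf_distinct big_nat_recr //= exprMn sqr_1DXn.
by have := odd_double_half n; rewrite odd_n => n_half; congr (_ * (1 + 'X^_)); lia.
Qed.

Lemma eqmodXn_gf_distinct_odd h n :
  (h <= n)%N -> eqmodXn h.+1 (gf_distinct_odd n) (gf_distinct_odd h).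
Proof.
move=> le_hn; rewrite /gf_distinct_odd (@big_cat_nat _ _ _ h.+1) //= -?ltnS //.
rewrite -[X in eqmodXn _ _ X]mulr1; apply: eqmodXnM; first exact: eqmodXn_refl.
rewrite big_nat_cond; apply: eqmodXn_prod1 => m /andP [/andP [lt_hm _] _].
exact: eqmodXn_1DXn.
Qed.

(* Euler's identity between odd and distinct parts, read modulo 2: since the even
   factors of [gf_distinct] form [gf_distinct] at [X^2], the product below is a
   square of the same product at half the precision. *)
Lemma euler_odd_distinct n : eqmodXn n.+1 (gf_distinct_odd n * gf_distinct n) 1.
Proof.
elim/ltn_ind: n => -[|n] IHn.
  by rewrite /gf_distinct_odd /gf_distinct !big_geq // mulr1; apply: eqmodXn_refl.
set h := n.+1./2; have n_half := odd_double_half n.+1; rewrite -/h in n_half.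
have lt_hn : (h < n.+1)%N by case: (odd n.+1) n_half => /=; lia.
have trunc : eqmodXn h.+1 (gf_distinct_odd n.+1 * gf_distinct h) 1.
  apply: eqmodXn_trans (IHn h lt_hn); apply: eqmodXnM; last exact: eqmodXn_refl.
  exact/eqmodXn_gf_distinct_odd/ltnW.
have -> : gf_distinct_odd n.+1 * gf_distinct n.+1 =
          (gf_distinct_odd n.+1 * gf_distinct h) ^+ 2.
  by rewrite gf_distinct_split gf_distinct_even_sqr -/h; ring.
by apply: eqmodXn_le (eqmodXn_sqr1 trunc); case: (odd n.+1) n_half => /=; lia.
Qed.

Lemma geom_truncM_1DXn N k : geom_trunc R N k * (1 + 'X^k) = 1 + 'X^(k * N.+1).
Proof.
have := subrX1 ('X^k : {poly R}) N.+1.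
rewrite !(oppr_pchar2 pchar2_poly) -exprM addrC => ->.
rewrite mulrC addrC; congr (_ * _).
by apply: eq_bigr => j _; rewrite exprM.
Qed.

Lemma gf_odd_parts_inv N : eqmodXn N.+1 (gf_odd_parts R N * gf_distinct_odd N) 1.
Proof.
rewrite /gf_odd_parts /gf_distinct_odd -big_split /= big_nat_cond.
apply: eqmodXn_prod1 => m /andP [/andP [m_gt0 _] _].
by rewrite geom_truncM_1DXn; apply/eqmodXn_1DXn/leq_pmull.
Qed.

Lemma eqmodXn_gf_odd_parts_distinct N : eqmodXn N.+1 (gf_odd_parts R N) (gf_distinct N).
Proof.
apply: (@eqmodXn_trans _ _ _ (gf_odd_parts R N * (gf_distinct_odd N * gf_distinct N))).
  rewrite -[X in eqmodXn _ X _]mulr1; apply: eqmodXnM; first exact: eqmodXn_refl.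
  exact/eqmodXn_sym/euler_odd_distinct.
rewrite mulrA -[X in eqmodXn _ _ X]mul1r; apply: eqmodXnM; first exact: gf_odd_parts_inv.
exact: eqmodXn_refl.
Qed.

Lemma gf_distinct_pchar2 n : gf_distinct n = \prod_(1 <= m < n.+1) (1 - 'X^m).
Proof. by apply: eq_bigr => m _; rewrite (oppr_pchar2 pchar2_poly). Qed.

Lemma coef_gf_odd_parts N : (gf_odd_parts R N)`_N = (pentagonal_sum R N)`_N.
Proof.
rewrite (eqmodXn_coef (eqmodXn_gf_odd_parts_distinct N)) //.
by rewrite gf_distinct_pchar2 coef_prod_1subXn.
Qed.

End CharTwo.

Local Close Scope ring_scope.

Lemma prime_sqr_mod24 p : prime p -> 5 <= p -> p ^ 2 = 1 %[mod 24].
Proof.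
move=> p_prime p_ge5.
have odd_p : odd p by case: (even_prime p_prime) => // p2; rewrite p2 in p_ge5.
have not_3_dvd_p : ~~ (3 %| p).
  by apply/negP => /(@prime_nt_dvdP 3 p p_prime isT) p3; rewrite -p3 in p_ge5.
have : p %% 24 %% 2 = 1 by rewrite modn_dvdm // modn2 odd_p.
have : p %% 24 %% 3 != 0 by rewrite modn_dvdm.
rewrite -modnXm; have : p %% 24 < 24 by rewrite ltn_pmod.
by move: (p %% 24); do 24! case=> //.
Qed.

Lemma mul_divn_pred d A : 0 < d -> A %% d = 1 -> d * ((A - 1) %/ d) + 1 = A.
Proof.
move=> d_gt0 A_mod; have A_eq := divn_eq A d; rewrite A_mod in A_eq.
by rewrite {1}A_eq addnK mulnK // mulnC -A_eq.
Qed.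

Lemma mul24_index_add1 p alpha n j : prime p -> 5 <= p ->
  24 * (p ^ (2 * alpha + 1) * n + ((24 * j + 1) * p ^ (2 * alpha) - 1) %/ 24) + 1
  = p ^ alpha * p ^ alpha * (24 * p * n + (24 * j + 1)).
Proof.
move=> p_prime p_ge5.
have A_mod : (24 * j + 1) * p ^ (2 * alpha) %% 24 = 1.
  have p2a_mod : p ^ (2 * alpha) = 1 %[mod 24].
    by rewrite expnM -modnXm prime_sqr_mod24 // modnXm exp1n.
  by rewrite -modnMmr p2a_mod modnMmr muln1 mulnC modnMDl.
rewrite mulnDr -addnA mul_divn_pred // -expnD addnn -mul2n expnD expn1; ring.
Qed.

Lemma square_cancel k x M : 0 < k -> x * x = k * k * M -> exists y, y * y = M.
Proof.
move=> k_gt0 sq_x.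
have /dvdnP [y x_eq] : k %| x.
  by rewrite -(@dvdn_pexp2r _ _ 2) // !expnS !expn0 !muln1 sq_x dvdn_mulr.
exists y; apply/eqP; rewrite -(@eqn_pmul2l (k * k)) ?muln_gt0 ?k_gt0 //.
by rewrite -sq_x x_eq; apply/eqP; ring.
Qed.

Lemma legendre_neg_nonsquare p a y :
  0 < p -> legendre p a = (-1)%R -> y * y = a %[mod p] -> False.
Proof.
move=> p_gt0; rewrite /legendre; case: ifP => // _.
case: ifP => // /negbT /existsPn no_root _ sq_y.
by move: (no_root (Ordinal (ltn_pmod y p_gt0))); rewrite /= modnMm sq_y eqxx.
Qed.

Theorem theorem3p3 (p alpha n j : nat) :
  prime p -> 5 <= p -> j <= p - 1 -> legendre p (24 * j + 1) = (-1)%R ->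
  b 2 (p ^ (2 * alpha + 1) * n + ((24 * j + 1) * p ^ (2 * alpha) - 1) %/ 24) %% 2 = 0.
Proof.
move=> p_prime p_ge5 _ nonresidue.
set N := _ + _.
have p_gt0 := prime_gt0 p_prime.
have nonsq x : x * x != 24 * N + 1.
  apply/eqP; rewrite mul24_index_add1 // => sq_x.
  have [|y sq_y] := square_cancel _ sq_x; first by rewrite expn_gt0 p_gt0.
  apply: (legendre_neg_nonsquare p_gt0 nonresidue (y := y)).
  by rewrite sq_y mulnAC modnMDl.
have b2N : ((b 2 N)%:R = 0 :> 'F_2)%R.
  rewrite b2_gf_odd_parts (coef_gf_odd_parts (pchar_Fp (isT : prime 2))).
  exact: coef_pentagonal_sum_nonsquare.
by have := val_Fp_nat (isT : prime 2) (b 2 N); rewrite b2N.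
Qed.
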